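(* Let $N_{\rm S}\ge0$, $r=\sinh^{-1}\sqrt{N_{\rm S}}$, $\kappa\ge0$, $n_{\rm B}\ge\max\{\kappa-1,0\}$. Let the two-mode squeezed vacuum $\hat S_2(r)|0\rangle_S|0\rangle_A$ be prepared and mode $S$ sent through $\mathcal N_{\kappa,n_{\rm B}}$ (output mode $R$), while $A$ is kept noiselessly. Perform a Bell measurement: interfere $R$ and $A$ on a balanced beamsplitter and homodyne the $\hat p$ quadrature of one output port and the $\hat q$ quadrature of the other. The classical Fisher information with respect to $n_{\rm B}$ of the joint outcome is $$\mathcal I_{\rm Bell}=\frac{1}{\Big(n_{\rm B}+\kappa N_{\rm S}-2\sqrt{\kappa N_{\rm S}(N_{\rm S}+1)}+N_{\rm S}+1\Big)^2}.$$
   Context: $\hat S_2(r)=\exp[-r(\hat a_S\hat a_A-\hat a_S^\dagger\hat a_A^\dagger)]$; the signal mode of $\hat S_2(r)|0,0\rangle$ has mean photon number $\sinh^2r$. Quadratures are $\hat q=\hat a+\hat a^\dagger$, $\hat p=-i(\hat a-\hat a^\dagger)$ (vacuum covariance is the identity). $\mathcal N_{\kappa,n_{\rm B}}$ is the single-mode phase-covariant bosonic Gaussian channel mapping quadrature mean $\bar x\mapsto\sqrt\kappa\,\bar x$ and covariance $V\mapsto\kappa V+(2n_{\rm B}+1-\kappa)I_2$. Classical Fisher information of an outcome density $p(x|\theta)$ is $\int(\partial_\theta\log p)^2p\,dx$. *)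

From HB Require Import structures.
From mathcomp Require Import all_boot all_order all_algebra.
From mathcomp Require Import all_classical all_reals all_analysis.
Set Implicit Arguments. Unset Strict Implicit. Unset Printing Implicit Defensive.
Import Order.TTheory GRing.Theory Num.Theory.
Import numFieldNormedType.Exports.
Local Open Scope ring_scope.

Section Bell.
Variable R : realType.

Definition sinhR (x : R) : R := (expR x - expR (- x)) / 2.
Definition coshR (x : R) : R := (expR x + expR (- x)) / 2.

(* Quadrature ordering for two modes: (q_1, p_1, q_2, p_2); vacuum covariance = identity.
   Covariance of the two-mode squeezed vacuum S_2(r)|0,0>, modes (S, A):
   [[cosh 2r I, sinh 2r Z], [sinh 2r Z, cosh 2r I]], Z = diag(1,-1). *)
Definition tmsv_cov (r : R) : 'M[R]_4 :=
  \matrix_(i < 4, j < 4)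
    if i == j then coshR (2 * r)
    else if (((i : nat) + 2 == j) || ((j : nat) + 2 == i))%N then
      (if odd i then - sinhR (2 * r) else sinhR (2 * r))
    else 0.

Definition chanX (kappa : R) : 'M[R]_4 :=
  \matrix_(i < 4, j < 4) if i == j then (if (i < 2)%N then Num.sqrt kappa else 1) else 0.
Definition chanY (kappa nB : R) : 'M[R]_4 :=
  \matrix_(i < 4, j < 4) if (i == j) && (i < 2)%N then 2 * nB + 1 - kappa else 0.
Definition channel_first (kappa nB : R) (V : 'M[R]_4) : 'M[R]_4 :=
  chanX kappa *m V *m (chanX kappa)^T + chanY kappa nB.

(* Balanced beamsplitter on modes (R, A): output port 1 = (R + A)/sqrt 2,
   output port 2 = (R - A)/sqrt 2 (symplectic matrix on quadratures). *)
Definition bs_mat : 'M[R]_4 :=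
  \matrix_(i < 4, j < 4)
    if odd i == odd j then
      (if ((2 <= i) && (2 <= j))%N then -1 else 1) / Num.sqrt 2
    else 0.

(* Homodyne detection of p on port 1 (index 1) and q on port 2 (index 2). *)
Definition bell_select : 'M[R]_(2, 4) :=
  \matrix_(i < 2, j < 4) if ((i : nat).+1 == j)%N then 1 else 0.

(* Covariance of the joint (p_1, q_2) homodyne outcome (the mean is zero throughout). *)
Definition bell_outcome_cov (r kappa nB : R) : 'M[R]_2 :=
  bell_select *m (bs_mat *m channel_first kappa nB (tmsv_cov r) *m bs_mat^T)
    *m bell_select^T.

Definition gauss2 (S : 'M[R]_2) (x : R * R) : R :=
  let v : 'rV[R]_2 := \row_(k < 2) (if k == 0 then x.1 else x.2) in
  expR (- ((v *m invmx S *m v^T) 0 0) / 2) / (2 * pi * Num.sqrt (\det S)).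

Definition bell_density (r kappa nB : R) (x : R * R) : R :=
  gauss2 (bell_outcome_cov r kappa nB) x.

Definition fisher_bell (r kappa nB : R) : \bar R :=
  (\int[(@lebesgue_measure R) \x (@lebesgue_measure R)]_(x in [set: R * R])
     ((derive1 (fun t => ln (bell_density r kappa t x)) nB) ^+ 2
       * bell_density r kappa nB x)%:E)%E.

End Bell.

(* The Bell measurement turns a two-mode covariance [[a I, c Z], [c Z, b I]]
   into an isotropic two-dimensional Gaussian of variance (a + b)/2 - c.  For the
   two-mode squeezed vacuum sent through the channel this variance is nB + K with
   K = (sqrt (kappa NS) - sqrt (NS + 1))^2, so nB only shifts the variance, and
   the hypotheses make it positive.  For an isotropic Gaussian of variance s the
   score with respect to s is |x|^2 / (2 s^2) - 1/s, whose second moment is 1/s^2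
   by the normal moments E x^2 = s and E x^4 = 3 s^2.  The even moments of the
   centred normal g follow by integrating x^(j+1) against x g = (-s g)' on [0, n]
   and letting n go to infinity; the boundary term vanishes because
   exp y >= y^(j+1) / (j+1)!. *)

From HB Require Import structures.
From mathcomp Require Import all_boot all_order all_algebra.
From mathcomp Require Import all_classical all_reals all_analysis.
From mathcomp Require Import measurable_realfun ring lra.
Import Order.TTheory GRing.Theory Num.Theory.
Import numFieldNormedType.Exports.
Set Implicit Arguments.
Unset Strict Implicit.
Unset Printing Implicit Defensive.
Local Open Scope classical_set_scope.
Local Open Scope ring_scope.

Section real_integrals.
Context {R : realType}.
Local Notation mu := (@lebesgue_measure R).

Lemma derivableT_oo_LRcontinuous (F : R -> R) (a b : R) :
  (forall x, derivable F x 1) -> derivable_oo_LRcontinuous F a b.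
Proof.
move=> dF; have cF : continuous F.
  by move=> x; apply: differentiable_continuous; apply/derivable1_diffP.
split.
- by move=> x _; exact: dF.
- exact: cvg_at_right_filter (cF a).
- exact: cvg_at_left_filter (cF b).
Qed.

Lemma continuous_integral_itv_fin_num (f : R -> R) (a b : R) : continuous f ->
  (\int[mu]_(x in `[a, b]) (f x)%:E)%E \is a fin_num.
Proof.
move=> cf; apply: integrable_fin_num => //.
apply: continuous_compact_integrable; first exact: segment_compact.
exact: continuous_subspaceT.
Qed.

Lemma ge0_integral_itv0y_recurrence (f g : R -> R) (h : R ^nat) (c l : R) :
  (forall x, 0 <= f x) -> measurable_fun setT f ->
  (forall x, 0 <= g x) -> measurable_fun setT g ->
  h @ \oo --> 0 ->
  (forall n : nat, (0 < n)%N -> \int[mu]_(x in `[0%R, n%:R]) (f x)%:E =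
     (h n + c * fine (\int[mu]_(x in `[0%R, n%:R]) (g x)%:E))%:E)%E ->
  (\int[mu]_(x in `[0%R, +oo[) (g x)%:E = l%:E)%E ->
  (\int[mu]_(x in `[0%R, +oo[) (f x)%:E = (c * l)%:E)%E.
Proof.
move=> f0 mf g0 mg h0 fE gl.
have := ge0_cvgn_integral (mu := mu) g0 mg; rewrite gl => /fine_cvg /= g_cvg.
have fn_cvg : (fun n => (h n + c * fine (\int[mu]_(x in `[0%R, n%:R]) (g x)%:E))%:E)%E
    @ \oo --> (c * l)%:E.
  apply: cvg_EFin; first exact: nearW.
  by rewrite -[c * l]add0r; apply: cvgD => //; apply: cvgM => //; exact: cvg_cst.
have f_cvg : (\int[mu]_(x in `[0%R, n%:R]) (f x)%:E)%E @[n --> \oo] --> (c * l)%:E.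
  apply: cvg_trans fn_cvg; apply: near_eq_cvg; near=> n; apply/esym/fE.
  by near: n; exists 1%N.
exact: cvg_unique (ge0_cvgn_integral (mu := mu) f0 mf) f_cvg.
Unshelve. all: by end_near.
Qed.

Lemma ge0_even_integral (f : R -> R) : (forall x, 0 <= f x) -> continuous f ->
  (forall x, f (- x) = f x) ->
  (\int[mu]_x (f x)%:E = 2%:E * \int[mu]_(x in `[0%R, +oo[) (f x)%:E)%E.
Proof.
move=> f0 cf fN; rewrite ge0_symfun_integralT //; last by move=> x /=; rewrite fN.
congr (_ * \int[mu]_(x in _) _)%E.
by apply/seteqP; split => x /=; rewrite in_itv /= andbT.
Qed.

End real_integrals.

Section gauss1.
Context {R : realType}.
Local Notation mu := (@lebesgue_measure R).

Definition gauss1 (s x : R) : R := normal_pdf 0 (Num.sqrt s) x.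

Definition odd_dfact (i : nat) : R := \prod_(k < i) (k.*2.+1)%:R.

Lemma odd_dfact0 : odd_dfact 0 = 1.
Proof. exact: big_ord0. Qed.

Lemma odd_dfactS i : odd_dfact i.+1 = i.*2.+1%:R * odd_dfact i.
Proof. by rewrite /odd_dfact big_ord_recr mulrC. Qed.

Variable s : R.
Hypothesis s_gt0 : 0 < s.
Local Notation g := (gauss1 s).
Let k := normal_peak (Num.sqrt s).

Let sqrt_s_neq0 : Num.sqrt s != 0.
Proof. by rewrite gt_eqF // sqrtr_gt0. Qed.

Lemma gauss1E x : g x = k * expR (- (x ^+ 2) / (2 * s)).
Proof.
by rewrite /gauss1 normal_pdfE // /normal_fun subr0 sqr_sqrtr ?ltW // -mulr_natl.
Qed.

Lemma gauss1_ge0 x : 0 <= g x.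
Proof. exact: normal_pdf_ge0. Qed.

Lemma continuous_gauss1 : continuous g.
Proof. exact: continuous_normal_pdf. Qed.

Lemma gauss1N x : g (- x) = g x.
Proof. by rewrite !gauss1E sqrrN. Qed.

Lemma is_derive_gauss1 (x : R) : is_derive x 1 g (- (x / s) * g x).
Proof.
have -> : g = fun y => k * expR (- (y ^+ 2) / (2 * s)) by apply/funext => y; exact: gauss1E.
have arg' : is_derive x 1 (fun y : R => - (y ^+ 2) / (2 * s)) (- (2 * x) / (2 * s)).
  by apply: is_derive_eq; rewrite scaler0 add0r /GRing.scale /= !mulr1; ring.
have := is_derive1_comp (is_derive_expR _) arg'.
by move=> ?; apply: is_derive_eq; rewrite /GRing.scale /=; field; rewrite gt_eqF.
Qed.

Lemma exprn_gauss1_le j (x : R) : 1 <= x ->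
  x ^+ j.+1 * g x <= k * ((2 * s) ^+ j.+1 * j.+1`!%:R).
Proof.
move=> x1; have x0 : 0 < x by apply: lt_le_trans x1.
set y := x ^+ 2 / (2 * s).
have y0 : 0 <= y by rewrite divr_ge0 ?sqr_ge0 // mulr_ge0 // ltW.
have y_exp : y ^+ j.+1 / j.+1`!%:R <= expR y.
  by apply: le_trans (expR_ge1Dxn j y0); rewrite lerDr.
have x_y : x ^+ (j.+1).*2 = (2 * s) ^+ j.+1 * y ^+ j.+1.
  by rewrite -exprMn /y mulrC divfK ?gt_eqF ?mulr_gt0 // -exprM mul2n.
rewrite gauss1E -/y mulNr expRN mulrCA ler_wpM2l ?normal_peak_ge0 //.
rewrite ler_pdivrMr ?expR_gt0 // -/y.
apply: (@le_trans _ _ (x ^+ (j.+1).*2)).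
  by apply: ler_weXn2l => //; rewrite -addnn leq_addl.
rewrite x_y -mulrA ler_wpM2l //; first by rewrite exprn_ge0 // mulr_ge0 // ltW.
by move: y_exp; rewrite ler_pdivrMr ?ltr0n ?fact_gt0 // mulrC.
Qed.

Lemma cvgn_exprn_gauss1 j : n%:R ^+ j * g n%:R @[n --> \oo] --> 0.
Proof.
set C := k * ((2 * s) ^+ j.+1 * j.+1`!%:R).
have C0 : 0 <= C.
  by rewrite mulr_ge0 ?normal_peak_ge0 // mulr_ge0 // exprn_ge0 // mulr_ge0 // ltW.
apply: (squeeze_cvgr (f := fun=> 0) (h := fun n => 2 * C * harmonic n)).
- near=> n.
  have n1 : 1 <= n%:R :> R by rewrite ler1n; near: n; exists 1%N.
  have n0 : 0 < n%:R :> R by apply: lt_le_trans n1.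
  rewrite /= mulr_ge0 ?gauss1_ge0 ?exprn_ge0 //=.
  have le_C : n%:R ^+ j * g n%:R <= C / n%:R.
    by rewrite ler_pdivlMr // mulrAC -exprSr; exact: exprn_gauss1_le.
  apply: le_trans le_C _; rewrite /harmonic /= ler_pdivlMr ?ltr0Sn //.
  rewrite mulrAC ler_pdivrMr // -natr1; nra.
- exact: cvg_cst.
- rewrite -(mulr0 (2 * C)); apply: cvgM; [exact: cvg_cst | exact: cvg_harmonic].
Unshelve. all: by end_near.
Qed.

Lemma continuous_exprn_gauss1 i : continuous (fun x : R => x ^+ i * g x).
Proof. by move=> x; apply: cvgM; [exact: exprn_continuous | exact: continuous_gauss1]. Qed.

Lemma even_exprn_gauss1_ge0 i (x : R) : 0 <= x ^+ i.*2 * g x.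
Proof. by rewrite mulr_ge0 ?gauss1_ge0 // -mul2n exprM exprn_ge0 ?sqr_ge0. Qed.

Lemma integral_itv_exprn_gauss1 j (b : R) : 0 < b ->
  (\int[mu]_(x in `[0%R, b]) (x ^+ j.+2 * g x)%:E =
   (- s * (b ^+ j.+1 * g b)
    + j.+1%:R * s * fine (\int[mu]_(x in `[0%R, b]) (x ^+ j * g x)%:E))%:E)%E.
Proof.
move=> b0.
have dF (x : R) : is_derive x 1 (fun y : R => y ^+ j.+1) (j.+1%:R * x ^+ j).
  have := is_deriveX j.+1 (is_derive_id x 1); rewrite /GRing.scale /= mulr1.
  suff -> : id ^+ j.+1 = (fun y : R => y ^+ j.+1) by [].
  by apply/funext => y; rewrite exprfctE.
have dG (x : R) : is_derive x 1 (fun y => - s * g y) (x * g x).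
  have := is_derive_gauss1 x => ?.
  by apply: is_derive_eq; rewrite /GRing.scale /=; field; rewrite gt_eqF.
have cf : continuous (fun x : R => j.+1%:R * x ^+ j).
  by move=> x; apply: cvgM; [exact: cvg_cst | exact: exprn_continuous].
transitivity (\int[mu]_(x in `[0%R, b]) (x ^+ j.+1 * (x * g x))%:E)%E.
  by apply: eq_integral => x _; rewrite mulrA -exprSr.
rewrite (@integration_by_parts R (fun y : R => y ^+ j.+1) (fun y => - s * g y)
  (fun x => j.+1%:R * x ^+ j) (fun x => x * g x) 0 b b0); last 6 first.
- exact: continuous_subspaceT.
- by apply: derivableT_oo_LRcontinuous => x; have [] := dF x.
- by move=> x _; rewrite derive1E; have [] := dF x.
- apply: continuous_subspaceT => x.
  by apply: cvgM; [exact: cvg_id | exact: continuous_gauss1].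
- by apply: derivableT_oo_LRcontinuous => x; have [] := dG x.
- by move=> x _; rewrite derive1E; have [] := dG x.
rewrite expr0n /= mul0r subr0.
rewrite (_ : \int[mu]_(x in _) _ =
    (- s * j.+1%:R)%:E * \int[mu]_(x in `[0%R, b]) (x ^+ j * g x)%:E)%E; last first.
  rewrite -integralZl //; last first.
    apply: continuous_compact_integrable; first exact: segment_compact.
    exact: continuous_subspaceT (@continuous_exprn_gauss1 j).
  by apply: eq_integral => x _; rewrite -EFinM; congr EFin; ring.
rewrite -[X in (_ - _ * X)%E]fineK; last first.
  exact/continuous_integral_itv_fin_num/continuous_exprn_gauss1.
by rewrite -EFinM -EFinB; congr EFin; ring.
Qed.

Let integral_even_exprn_gauss1_itv0y i :
  (\int[mu]_x (x ^+ i.*2 * g x)%:E =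
   2%:E * \int[mu]_(x in `[0%R, +oo[) (x ^+ i.*2 * g x)%:E)%E.
Proof.
apply: ge0_even_integral => [x||x]; first exact: even_exprn_gauss1_ge0.
  exact: continuous_exprn_gauss1.
by rewrite gauss1N -mul2n !exprM sqrrN.
Qed.

Lemma integral_itv0y_even_moment_gauss1 i :
  (\int[mu]_(x in `[0%R, +oo[) (x ^+ i.*2 * g x)%:E = (odd_dfact i * s ^+ i / 2)%:E)%E.
Proof.
elim: i => [|i IH].
  rewrite odd_dfact0 expr0 !mul1r.
  have : (\int[mu]_x (x ^+ 0.*2 * g x)%:E = 1)%E.
    by under eq_integral do rewrite mul1r; exact: integral_normal_pdf.
  rewrite integral_even_exprn_gauss1_itv0y.
  have : (0 <= \int[mu]_(x in `[0%R, +oo[) (x ^+ 0.*2 * g x)%:E)%E.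
    by apply: integral_ge0 => x _; rewrite lee_fin even_exprn_gauss1_ge0.
  case: (\int[mu]_(x in _) _)%E => [r| |] //= _; last by rewrite mulry gtr0_sg // mul1e.
  by rewrite -EFinM => -[r2]; congr EFin; lra.
have -> : odd_dfact i.+1 * s ^+ i.+1 / 2 = i.*2.+1%:R * s * (odd_dfact i * s ^+ i / 2).
  by rewrite odd_dfactS exprS; ring.
apply: (ge0_integral_itv0y_recurrence
  (h := fun n => - s * (n%:R ^+ i.*2.+1 * g n%:R)) _ _ _ _ _ _ IH).
- exact: even_exprn_gauss1_ge0.
- by apply: continuous_measurable_fun; exact: continuous_exprn_gauss1.
- exact: even_exprn_gauss1_ge0.
- by apply: continuous_measurable_fun; exact: continuous_exprn_gauss1.
- by rewrite -(mulr0 (- s)); apply: cvgM; [exact: cvg_cst | exact: cvgn_exprn_gauss1].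
by move=> n n0; apply: integral_itv_exprn_gauss1; rewrite ltr0n.
Qed.

Lemma integral_even_moment_gauss1 i :
  (\int[mu]_x (x ^+ i.*2 * g x)%:E = (odd_dfact i * s ^+ i)%:E)%E.
Proof.
rewrite integral_even_exprn_gauss1_itv0y integral_itv0y_even_moment_gauss1 -EFinM.
by congr EFin; field.
Qed.

End gauss1.

Section has_integral.
Context {d} {T : measurableType d} {R : realType} (mu : {measure set T -> \bar R}).

Definition has_integral (f : T -> R) (a : R) :=
  mu.-integrable setT (EFin \o f) /\ (\int[mu]_x (f x)%:E = a%:E)%E.

Lemma eq_has_integral (f g : T -> R) (a b : R) :
  f =1 g -> a = b -> has_integral f a -> has_integral g b.
Proof. by move=> /funext <- <-. Qed.

Lemma has_integralD (f g : T -> R) (a b : R) :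
  has_integral f a -> has_integral g b -> has_integral (f \+ g) (a + b).
Proof.
move=> [if_ fa] [ig gb]; split.
  by apply: eq_integrable (integrableD measurableT if_ ig) => // x _ /=; rewrite EFinD.
by under eq_integral do rewrite EFinD; rewrite integralD // fa gb.
Qed.

Lemma has_integralZ (c : R) (f : T -> R) (a : R) :
  has_integral f a -> has_integral (fun x => c * f x) (c * a).
Proof.
move=> [if_ fa]; split.
  by apply: eq_integrable (integrableZl measurableT c if_) => // x _ /=; rewrite EFinM.
by under eq_integral do rewrite EFinM; rewrite integralZl // fa -EFinM.
Qed.

End has_integral.

Lemma has_integral_prod d1 d2 (T1 : measurableType d1) (T2 : measurableType d2)
    (R : realType) (m1 : {sigma_finite_measure set T1 -> \bar R})
    (m2 : {sigma_finite_measure set T2 -> \bar R}) (f1 : T1 -> R) (f2 : T2 -> R) (a b : R) :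
  measurable_fun setT f1 -> measurable_fun setT f2 ->
  (forall x, 0 <= f1 x) -> (forall y, 0 <= f2 y) ->
  (\int[m1]_x (f1 x)%:E = a%:E)%E -> (\int[m2]_y (f2 y)%:E = b%:E)%E ->
  has_integral (m1 \x m2)%E (fun z => f1 z.1 * f2 z.2) (a * b).
Proof.
move=> mf1 mf2 f10 f20 f1a f2b.
have mf : measurable_fun setT (fun z : T1 * T2 => f1 z.1 * f2 z.2).
  by apply: measurable_funM; apply: measurableT_comp.
have f0 z : 0 <= f1 z.1 * f2 z.2 by rewrite mulr_ge0.
have b0 : 0 <= b.
  by rewrite -lee_fin -f2b; apply: integral_ge0 => y _; rewrite lee_fin.
have int_ab : (\int[(m1 \x m2)%E]_z (f1 z.1 * f2 z.2)%:E = (a * b)%:E)%E.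
  rewrite fubini_tonelli1 /fubini_F /=; last 2 first.
  - exact/measurable_EFinP.
  - by move=> z; rewrite lee_fin.
  transitivity (\int[m1]_x (b%:E * (f1 x)%:E))%E.
    apply: eq_integral => x _; rewrite muleC.
    under eq_integral do rewrite EFinM.
    rewrite ge0_integralZl_EFin; first by rewrite f2b.
    - exact: measurableT.
    - by move=> y _; rewrite lee_fin.
    - exact/measurable_EFinP.
    - exact: f10.
  rewrite ge0_integralZl_EFin; first by rewrite f1a -EFinM mulrC.
  - exact: measurableT.
  - by move=> x _; rewrite lee_fin.
  - exact/measurable_EFinP.
  - exact: b0.
split => //; apply/integrableP; split; first exact/measurable_EFinP.
under eq_integral do rewrite /= ger0_norm //.
by rewrite int_ab ltry.
Qed.

Section gauss2_fisher.
Context {R : realType}.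
Local Notation mu := (@lebesgue_measure R).
Local Notation mu2 := (mu \x mu)%E.

Lemma gauss2_scalar (s : R) (x : R * R) : 0 < s ->
  gauss2 s%:M x = expR (- ((x.1 ^+ 2 + x.2 ^+ 2) / s) / 2) / (2 * pi * s).
Proof.
move=> s0.
rewrite /gauss2 invmx_scalar mul_mx_scalar det_scalar sqrtr_sqr gtr0_norm //.
congr (expR (- _ / 2) / _).
rewrite -scalemxAl mxE !mxE big_ord_recr big_ord_recr big_ord0 /= !mxE /=.
by rewrite add0r mulrC.
Qed.

Lemma gauss2_scalar_prod (s : R) (x : R * R) : 0 < s ->
  gauss2 s%:M x = gauss1 s x.1 * gauss1 s x.2.
Proof.
move=> s0; rewrite gauss2_scalar // !gauss1E // /normal_peak.
have pi0 : 0 < (pi : R) := pi_gt0 R.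
have peak2 : Num.sqrt (Num.sqrt s ^+ 2 * pi *+ 2) ^+ 2 = s * pi * 2.
  rewrite sqr_sqrtr; last by rewrite mulrn_wge0 // mulr_ge0 ?sqr_ge0 ?ltW.
  by rewrite sqr_sqrtr ?ltW // mulr_natr.
rewrite mulrACA -expRD -expr2 exprVn peak2.
rewrite (_ : - x.1 ^+ 2 / (2 * s) + - x.2 ^+ 2 / (2 * s) = - ((x.1 ^+ 2 + x.2 ^+ 2) / s) / 2).
  by rewrite mulrC; congr (_ * _); congr (_^-1); ring.
by field; rewrite gt_eqF.
Qed.

Lemma has_integral_gauss2_score (s : R) : 0 < s ->
  has_integral mu2
    (fun x => ((x.1 ^+ 2 + x.2 ^+ 2) / (2 * s ^+ 2) - s^-1) ^+ 2 * gauss2 s%:M x)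
    (s ^+ 2)^-1.
Proof.
move=> s0.
have moment i j : has_integral mu2
    (fun x => x.1 ^+ i.*2 * gauss1 s x.1 * (x.2 ^+ j.*2 * gauss1 s x.2))
    (odd_dfact i * s ^+ i * (odd_dfact j * s ^+ j)).
  have meas m : measurable_fun setT (fun y : R => y ^+ m.*2 * gauss1 s y).
    by apply: continuous_measurable_fun; exact: continuous_exprn_gauss1.
  exact: (@has_integral_prod _ _ _ _ _ mu mu _ _ _ _ (meas i) (meas j)
    (even_exprn_gauss1_ge0 s i) (even_exprn_gauss1_ge0 s j)
    (integral_even_moment_gauss1 s0 i) (integral_even_moment_gauss1 s0 j)).
(* The squared score expands into products of even moments of the coordinates. *)
have := has_integralD (has_integralD (has_integralD
    (has_integralZ (4 * s ^+ 4)^-1 (moment 2 0)%N)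
    (has_integralZ (2 * s ^+ 4)^-1 (moment 1 1)%N))
  (has_integralD (has_integralZ (4 * s ^+ 4)^-1 (moment 0 2)%N)
    (has_integralZ (- (s ^+ 3)^-1) (moment 1 0)%N)))
  (has_integralD (has_integralZ (- (s ^+ 3)^-1) (moment 0 1)%N)
    (has_integralZ (s ^+ 2)^-1 (moment 0 0)%N)).
apply: eq_has_integral => [[y1 y2]|].
  by rewrite gauss2_scalar_prod //=; field; rewrite gt_eqF.
by rewrite !odd_dfactS odd_dfact0 !doubleS double0; field; rewrite gt_eqF.
Qed.

Lemma derive1_ln_gauss2_shift (K t0 : R) (x : R * R) : 0 < t0 + K ->
  derive1 (fun t => ln (gauss2 (t + K)%:M x)) t0 =
  (x.1 ^+ 2 + x.2 ^+ 2) / (2 * (t0 + K) ^+ 2) - (t0 + K)^-1.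
Proof.
move=> s0; set q := x.1 ^+ 2 + x.2 ^+ 2.
have pi0 : 0 < (pi : R) := pi_gt0 R.
have near_pos : \forall t \near t0, 0 < t + K.
  have : - K < t0 by rewrite -subr_gt0 opprK.
  by move=> /lt_nbhsr; apply: filterS => t; rewrite -subr_gt0 opprK.
rewrite derive1E (@near_eq_derive _ _ _ _
  (fun t => - (q / (t + K)) / 2 - ln (2 * pi * (t + K)))); last first.
  apply: filterS near_pos => t tK.
  by rewrite gauss2_scalar // ln_div ?expRK // posrE ?expR_gt0 // !mulr_gt0.
have dshift : is_derive t0 (1 : R) (fun t => t + K) 1.
  by apply: is_derive_eq; rewrite addr0.
have s_neq0 : t0 + K != 0 by rewrite gt_eqF.
have dinv := @is_deriveV _ (fun t => t + K) t0 1 1 s_neq0 dshift.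
have dln : is_derive t0 (1 : R) ((@ln R) \o (fun t => 2 * pi * (t + K)))
    ((2 * pi * (t0 + K))^-1 * (2 * pi)).
  have dlin : is_derive t0 (1 : R) (fun t => 2 * pi * (t + K)) (2 * pi).
    by apply: is_derive_eq; rewrite /GRing.scale /= mulr1.
  by apply: is_derive1_comp; apply: is_derive1_ln; rewrite !mulr_gt0.
have dscore : is_derive t0 (1 : R) (fun t => - (q / (t + K)) / 2 - ln (2 * pi * (t + K)))
    (q / (2 * (t0 + K) ^+ 2) - (t0 + K)^-1).
  apply: is_derive_eq; rewrite /GRing.scale /=; move: (pi : R) pi0 => p p0.
  by field; rewrite !gt_eqF.
by rewrite derive_val.
Qed.

Lemma fisher_gauss2_shift (K t0 : R) : 0 < t0 + K ->
  (\int[mu2]_x ((derive1 (fun t => ln (gauss2 (t + K)%:M x)) t0) ^+ 2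
                 * gauss2 (t0 + K)%:M x)%:E = ((t0 + K) ^+ 2)^-1%:E)%E.
Proof.
move=> s0; have [_ <-] := has_integral_gauss2_score s0.
by apply: eq_integral => x _; rewrite derive1_ln_gauss2_shift.
Qed.

End gauss2_fisher.

Section covariance.
Context {R : realType}.

Lemma coshR_double (x : R) : coshR (2 * x) = 1 + 2 * sinhR x ^+ 2.
Proof.
rewrite /coshR /sinhR mulr_natl mulr2n !expRN expRD.
by field; rewrite gt_eqF ?expR_gt0.
Qed.

Lemma sinhR_double (x : R) : sinhR (2 * x) = 2 * sinhR x * coshR x.
Proof.
rewrite /coshR /sinhR mulr_natl mulr2n !expRN expRD.
by field; rewrite gt_eqF ?expR_gt0.
Qed.

Lemma coshR_sqrt (x : R) : coshR x = Num.sqrt (1 + sinhR x ^+ 2).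
Proof.
have cosh_gt0 : 0 < coshR x by rewrite divr_gt0 // addr_gt0 ?expR_gt0.
rewrite -[LHS]gtr0_norm // -sqrtr_sqr; congr Num.sqrt.
by rewrite /coshR /sinhR expRN; field; rewrite gt_eqF ?expR_gt0.
Qed.

(* The covariance [[a I, c Z], [c Z, b I]] with Z = diag(1, -1), in the
   quadrature order of [tmsv_cov]. *)
Definition std_cov (a b c : R) : 'M[R]_4 :=
  \matrix_(i < 4, j < 4)
    if i == j then (if (i < 2)%N then a else b)
    else if (((i : nat) + 2 == j) || ((j : nat) + 2 == i))%N then
      (if odd i then - c else c)
    else 0.

Lemma tmsv_std_cov (r : R) :
  tmsv_cov r = std_cov (coshR (2 * r)) (coshR (2 * r)) (sinhR (2 * r)).
Proof. by apply/matrixP => i j; rewrite !mxE; case: (i < 2)%N; case: eqP. Qed.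

Lemma channel_first_std_cov (kappa nB a b c : R) :
  channel_first kappa nB (std_cov a b c) =
  std_cov (Num.sqrt kappa ^+ 2 * a + (2 * nB + 1 - kappa)) b (Num.sqrt kappa * c).
Proof.
apply/matrixP => i j.
rewrite /channel_first /chanX /chanY /std_cov !mxE.
rewrite !big_ord_recr !big_ord0 /= !mxE !big_ord_recr !big_ord0 /= !mxE.
case: i => [[|[|[|[|i]]]] Hi] //; case: j => [[|[|[|[|j]]]] Hj] //=.
all: rewrite ?mul0r ?mulr0 ?add0r ?addr0 ?mul1r ?mulr1 //.
all: ring.
Qed.

Lemma bell_select_conj (M : 'M[R]_4) :
  bell_select R *m M *m (bell_select R)^T =
  \matrix_(i < 2, j < 2) M (inord i.+1) (inord j.+1).
Proof.
apply/matrixP => i j; rewrite /bell_select.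
case: i => [[|[|i]] Hi] //; case: j => [[|[|j]] Hj] //=.
all: rewrite !mxE !big_ord_recr !big_ord0 /= !mxE !big_ord_recr !big_ord0 /= !mxE /=.
all: rewrite ?mul0r ?mulr0 ?add0r ?addr0 ?mul1r ?mulr1 //.
all: by congr (M _ _); apply: val_inj; rewrite /= inordK.
Qed.

Lemma bs_conj_std_cov (a b c : R) :
  let W := bs_mat R *m std_cov a b c *m (bs_mat R)^T in
  [/\ W 1 1 = (a + b) / 2 - c, W 2 2 = (a + b) / 2 - c, W 1 2 = 0 & W 2 1 = 0].
Proof.
have diagE : (a + b) / 2 - c = (Num.sqrt 2)^-1 ^+ 2 * (a + b - 2 * c).
  by rewrite exprVn sqr_sqrtr //; field.
rewrite diagE /bs_mat /std_cov.
split; rewrite !mxE !big_ord_recr !big_ord0 /= !mxE !big_ord_recr !big_ord0 /= !mxE /=.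
all: ring.
Qed.

Lemma bell_outcome_std_cov (a b c : R) :
  bell_select R *m (bs_mat R *m std_cov a b c *m (bs_mat R)^T) *m (bell_select R)^T =
  ((a + b) / 2 - c)%:M.
Proof.
have [W11 W22 W12 W21] := bs_conj_std_cov a b c.
have inord1 : (inord 1 : 'I_4) = 1 by apply: val_inj; rewrite /= inordK.
have inord2 : (inord 2 : 'I_4) = 2 by apply: val_inj; rewrite /= inordK.
rewrite bell_select_conj; apply/matrixP => i j; rewrite [LHS]mxE [RHS]mxE.
case: i => [[|[|i]] Hi] //; case: j => [[|[|j]] Hj] //=.
all: by rewrite ?inord1 ?inord2 ?W11 ?W22 ?W12 ?W21.
Qed.

End covariance.

Section bell_measurement.
Context {R : realType}.
Variables NS r kappa : R.
Hypotheses (NS_ge0 : 0 <= NS) (sinh_r : sinhR r = Num.sqrt NS) (kappa_ge0 : 0 <= kappa).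

Local Notation K := (kappa * NS - 2 * Num.sqrt (kappa * NS * (NS + 1)) + NS + 1).

Lemma bell_outcome_covE (t : R) : bell_outcome_cov r kappa t = (t + K)%:M.
Proof.
rewrite /bell_outcome_cov tmsv_std_cov channel_first_std_cov bell_outcome_std_cov.
congr _%:M; rewrite coshR_double sinhR_double coshR_sqrt sinh_r.
by rewrite !sqr_sqrtr // [1 + NS]addrC !sqrtrM ?mulr_ge0 //; field.
Qed.

Lemma bell_excess_noise : K = (Num.sqrt (kappa * NS) - Num.sqrt (NS + 1)) ^+ 2.
Proof.
rewrite sqrrB !sqr_sqrtr ?mulr_ge0 ?addr_ge0 // -sqrtrM ?mulr_ge0 //; ring.
Qed.

Lemma bell_variance_gt0 (nB : R) : Num.max (kappa - 1) 0 <= nB -> 0 < nB + K.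
Proof.
rewrite ge_max => /andP[kappa_nB nB_ge0]; rewrite bell_excess_noise.
have [kappa_le1 | kappa_gt1] := leP kappa 1; last first.
  by rewrite ltr_pwDl ?sqr_ge0 // (lt_le_trans _ kappa_nB) // subr_gt0.
have sqrt_lt : Num.sqrt (kappa * NS) < Num.sqrt (NS + 1).
  have kappa_NS : kappa * NS <= NS by rewrite -[leRHS]mul1r; apply: ler_wpM2r.
  rewrite ltr_sqrt; last exact: ltr_wpDl NS_ge0 ltr01.
  by rewrite (le_lt_trans kappa_NS) // ltrDl.
by rewrite ltr_wpDl // exprn_even_gt0 //= subr_eq0 lt_eqF.
Qed.

End bell_measurement.

Theorem mainTheorem7 (R : realType) (NS r kappa nB : R) :
  0 <= NS -> sinhR r = Num.sqrt NS ->
  0 <= kappa -> Num.max (kappa - 1) 0 <= nB ->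
  fisher_bell r kappa nB =
    (1 / (nB + kappa * NS - 2 * Num.sqrt (kappa * NS * (NS + 1)) + NS + 1) ^+ 2)%:E.
Proof.
move=> NS_ge0 sinh_r kappa_ge0 nB_ge.
have cov_fun := funext (bell_outcome_covE NS_ge0 sinh_r kappa_ge0).
rewrite /fisher_bell /bell_density cov_fun fisher_gauss2_shift.
  by rewrite div1r; congr (EFin (_ ^+ 2)^-1); ring.
exact: bell_variance_gt0.
Qed.
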